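(* Consider the control system, with state $(J_1,J_3,K_2,Q_2,J_0,Q_1,K_1,Q_3,K_3,J_2)\in\mathbb{R}^{10}$ and scalar control $g(t)$, \[ \begin{aligned} \dot J_1&=2gJ_3,\quad \dot J_3=-2gJ_1+2gK_2,\quad \dot K_2=2gJ_3+2Q_2,\quad \dot Q_2=-2K_2,\\ \dot J_0&=-2gQ_1,\quad \dot Q_1=-2gJ_0-2K_1+2gQ_3,\quad \dot K_1=2Q_1+2gK_3,\\ \dot Q_3&=-2gQ_1-2K_3,\quad \dot K_3=-2gK_1+2Q_3-2gJ_2,\quad \dot J_2=-2gK_3, \end{aligned} \] with initial state $(J_1,J_3,K_2,Q_2)=(-1,0,0,0)$, $(J_0,Q_1,K_1,Q_3,K_3,J_2)=(1,0,0,0,0,0)$ and target state $(J_1,J_3,K_2,Q_2)=(1,0,0,0)$, $(J_0,Q_1,K_1,Q_3,K_3,J_2)=(1,0,0,0,0,0)$. Let $m\in\{3,5,7,\ldots\}$ be an odd integer and let the control bound $G_0$ satisfy \[ \frac{m}{m^2+1}\le G_0<\frac{m-2}{(m-2)^2+1}. \] Then the minimum time $T>0$ at which the target state can be reached from the initial state using a constant control $g(t)\equiv G$ with $0<G\le G_0$ is \[ T=\frac{\pi}{2}\sqrt{m^2+1}, \] attained with the constant control $G=m/(m^2+1)$.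
   Context: Here $g(t)$ is the photon–phonon coupling rate (in units of the mechanical frequency) of a cavity optomechanical system, and the target corresponds to swapping photon and phonon populations. *)

From Stdlib Require Import Reals.
From Coquelicot Require Import Coquelicot.
Open Scope R_scope.

Definition is_solution (G : R)
  (J1 J3 K2 Q2 J0 Q1 K1 Q3 K3 J2 : R -> R) : Prop :=
  forall t : R,
    is_derive J1 t (2 * G * J3 t) /\
    is_derive J3 t (- 2 * G * J1 t + 2 * G * K2 t) /\
    is_derive K2 t (2 * G * J3 t + 2 * Q2 t) /\
    is_derive Q2 t (- 2 * K2 t) /\
    is_derive J0 t (- 2 * G * Q1 t) /\
    is_derive Q1 t (- 2 * G * J0 t - 2 * K1 t + 2 * G * Q3 t) /\
    is_derive K1 t (2 * Q1 t + 2 * G * K3 t) /\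
    is_derive Q3 t (- 2 * G * Q1 t - 2 * K3 t) /\
    is_derive K3 t (- 2 * G * K1 t + 2 * Q3 t - 2 * G * J2 t) /\
    is_derive J2 t (- 2 * G * K3 t).

Definition reaches (G T : R) : Prop :=
  exists J1 J3 K2 Q2 J0 Q1 K1 Q3 K3 J2 : R -> R,
    is_solution G J1 J3 K2 Q2 J0 Q1 K1 Q3 K3 J2 /\
    J1 0 = -1 /\ J3 0 = 0 /\ K2 0 = 0 /\ Q2 0 = 0 /\
    J0 0 = 1 /\ Q1 0 = 0 /\ K1 0 = 0 /\ Q3 0 = 0 /\ K3 0 = 0 /\ J2 0 = 0 /\
    J1 T = 1 /\ J3 T = 0 /\ K2 T = 0 /\ Q2 T = 0 /\
    J0 T = 1 /\ Q1 T = 0 /\ K1 T = 0 /\ Q3 T = 0 /\ K3 T = 0 /\ J2 T = 0.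

From Stdlib Require Import Reals Lra Lia Nsatz ZArith.
From Coquelicot Require Import Coquelicot.
Open Scope R_scope.

(* The system splits into a block (J1, J3, K2, Q2) whose normal modes have
   angular frequencies 2a and 2b, where a^2 + b^2 = 1 and a b = G, and a block
   (J0, Q1, K1, Q3, K3, J2) with frequencies 2 sqrt(1 + 2G) and 2 sqrt(1 - 2G).
   In the first block (b^2 J1 + a^2 K2, b J3 + a Q2) rotates with angular
   velocity 2a, and symmetrically with a and b exchanged, so flipping J1 from
   -1 to 1 at time T forces cos (2aT) = cos (2bT) = -1, i.e. 2aT = p pi and
   2bT = q pi with p < q odd.  Then G = pq / (p^2 + q^2) and
   2T = pi sqrt (p^2 + q^2).  As x / (x^2 + 1) decreases on [1, oo), the bound
   G0 < (m-2) / ((m-2)^2 + 1) forces q > (m-2) p, whence p^2 + q^2 >= m^2 + 1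
   by parity.  Conversely p = 1, q = m is realised by G = m / (m^2 + 1), for
   which both frequencies of the second block are even multiples of pi / T. *)

Lemma cos_INR_mult_PI (n : nat) : cos (INR n * PI) = (-1) ^ n.
Proof.
  induction n as [|n IHn].
  - now rewrite Rmult_0_l, cos_0.
  - rewrite S_INR, Rmult_plus_distr_r, Rmult_1_l, neg_cos, IHn. simpl; ring.
Qed.

Lemma sin_eq_0_of_cos_sq (x : R) : cos x * cos x = 1 -> sin x = 0.
Proof.
  intros Hcos. pose proof (sin2_cos2 x) as H. unfold Rsqr in H.
  apply Rsqr_0_uniq. unfold Rsqr. lra.
Qed.

Lemma cos_eq_m1_odd_mult_PI (x : R) :
  0 < x -> cos x = -1 -> exists k : nat, x = INR (S (2 * k)) * PI.
Proof.
  intros Hx Hcos.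
  assert (Hsin : sin x = 0) by (apply sin_eq_0_of_cos_sq; rewrite Hcos; ring).
  destruct (sin_eq_0_0 x Hsin) as [z Hz].
  assert (Hz0 : (0 <= z)%Z).
  { apply le_0_IZR. pose proof PI_RGT_0. subst x. nra. }
  rewrite <- (Z2Nat.id z Hz0), <- INR_IZR_INZ in Hz.
  destruct (Nat.Even_or_Odd (Z.to_nat z)) as [[k Hk]|[k Hk]];
    rewrite Hk in Hz.
  - exfalso. rewrite Hz, cos_INR_mult_PI, pow_1_even in Hcos. lra.
  - exists k. now rewrite Hz, Nat.add_1_r.
Qed.

Lemma is_derive_0_const (f : R -> R) :
  (forall t, is_derive f t 0) -> forall x y, f x = f y.
Proof.
  intros Hf x y.
  destruct (total_order_T x y) as [[Hxy|<-]|Hyx]; [| reflexivity |].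
  - now apply eq_is_derive.
  - now symmetry; apply eq_is_derive.
Qed.

Section Swap_block.

Variables (a b G : R) (J1 J3 K2 Q2 : R -> R).
Hypotheses (Hab : a * a + b * b = 1) (HG : G = a * b).
Hypothesis Hsys : forall t,
  is_derive J1 t (2 * G * J3 t) /\
  is_derive J3 t (- 2 * G * J1 t + 2 * G * K2 t) /\
  is_derive K2 t (2 * G * J3 t + 2 * Q2 t) /\
  is_derive Q2 t (- 2 * K2 t).

Lemma swap_block_first_integral (T : R) :
  (b * b * J1 T + a * a * K2 T) * cos (2 * a * T)
    - (b * J3 T + a * Q2 T) * sin (2 * a * T)
  = b * b * J1 0 + a * a * K2 0.
Proof.
  set (F t := (b * b * J1 t + a * a * K2 t) * cos (2 * a * t)
                - (b * J3 t + a * Q2 t) * sin (2 * a * t)).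
  transitivity (F 0).
  - change (F T = F 0). apply is_derive_0_const. intros t.
    destruct (Hsys t) as (HJ1 & HJ3 & HK2 & HQ2).
    unfold F; auto_derive.
    + repeat split; eexists; eassumption.
    + rewrite (is_derive_unique (fun x : R => J1 x) t _ HJ1),
        (is_derive_unique (fun x : R => J3 x) t _ HJ3),
        (is_derive_unique (fun x : R => K2 x) t _ HK2),
        (is_derive_unique (fun x : R => Q2 x) t _ HQ2).
      subst G; clear Hsys HJ1 HJ3 HK2 HQ2. nsatz.
  - unfold F. rewrite !Rmult_0_r, cos_0, sin_0. ring.
Qed.

Lemma swap_block_half_period (T : R) : b <> 0 ->
  J1 0 = -1 -> K2 0 = 0 ->
  J1 T = 1 -> J3 T = 0 -> K2 T = 0 -> Q2 T = 0 ->
  cos (2 * a * T) = -1.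
Proof.
  intros Hb HJ10 HK20 HJ1 HJ3 HK2 HQ2.
  pose proof (swap_block_first_integral T) as H.
  rewrite HJ10, HK20, HJ1, HJ3, HK2, HQ2 in H.
  apply (Rmult_eq_reg_l (b * b)); [nra | apply Rmult_integral_contrapositive; tauto].
Qed.

End Swap_block.

Lemma coupling_frequencies (G : R) :
  0 < G < 1 / 2 -> exists a b, 0 < a < b /\ a * a + b * b = 1 /\ G = a * b.
Proof.
  intros HG.
  pose proof (sqrt_sqrt (1 + 2 * G)) as Hp. pose proof (sqrt_sqrt (1 - 2 * G)) as Hq.
  pose proof (sqrt_lt_R0 (1 - 2 * G)) as Hq0.
  pose proof (sqrt_lt_1 (1 - 2 * G) (1 + 2 * G)) as Hqp.
  exists ((sqrt (1 + 2 * G) - sqrt (1 - 2 * G)) / 2),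
         ((sqrt (1 + 2 * G) + sqrt (1 - 2 * G)) / 2).
  repeat split; nra.
Qed.

Lemma reaches_odd_resonance (G T : R) : 0 < G < 1 / 2 -> 0 < T -> reaches G T ->
  exists p q : nat, Nat.Odd p /\ Nat.Odd q /\ (p < q)%nat /\
    G * (INR p ^ 2 + INR q ^ 2) = INR p * INR q /\
    (2 * T) ^ 2 = PI ^ 2 * (INR p ^ 2 + INR q ^ 2).
Proof.
  intros HG HT (J1 & J3 & K2 & Q2 & J0 & Q1 & K1 & Q3 & K3 & J2 & Hsol & HJ10 & _ & HK20 & _
    & _ & _ & _ & _ & _ & _ & HJ1 & HJ3 & HK2 & HQ2 & _).
  destruct (coupling_frequencies G HG) as (a & b & Hab & Hsq & HGab).
  assert (Hsys : forall t,
    is_derive J1 t (2 * G * J3 t) /\ is_derive J3 t (- 2 * G * J1 t + 2 * G * K2 t) /\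
    is_derive K2 t (2 * G * J3 t + 2 * Q2 t) /\ is_derive Q2 t (- 2 * K2 t)).
  { intros t. destruct (Hsol t) as (H1 & H2 & H3 & H4 & _). tauto. }
  assert (Hca : cos (2 * a * T) = -1).
  { apply (swap_block_half_period a b G J1 J3 K2 Q2); auto; lra. }
  assert (Hcb : cos (2 * b * T) = -1).
  { apply (swap_block_half_period b a G J1 J3 K2 Q2); auto; lra. }
  pose proof PI_RGT_0.
  destruct (cos_eq_m1_odd_mult_PI (2 * a * T) ltac:(nra) Hca) as [k Hk].
  destruct (cos_eq_m1_odd_mult_PI (2 * b * T) ltac:(nra) Hcb) as [l Hl].
  assert (Hkl : INR (S (2 * k)) < INR (S (2 * l))).
  { apply (Rmult_lt_reg_r PI); [lra|]. rewrite <- Hk, <- Hl. nra. }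
  exists (S (2 * k)), (S (2 * l)).
  repeat split; [exists k; lia | exists l; lia | now apply INR_lt | |].
  - apply (Rmult_eq_reg_r (PI ^ 2)); [| nra].
    cbn [pow]. clear - Hk Hl Hsq HGab. nsatz.
  - cbn [pow]. clear - Hk Hl Hsq. nsatz.
Qed.

Lemma div_sq_add1_le_half (x : R) : x / (x ^ 2 + 1) <= 1 / 2.
Proof.
  apply (Rmult_le_reg_r (x ^ 2 + 1)); [nra|].
  unfold Rdiv. rewrite (Rmult_assoc x), Rinv_l by nra.
  pose proof (pow2_ge_0 (x - 1)). nra.
Qed.

Lemma resonance_ratio_gt (G c p q : R) : 1 <= c -> 0 < p < q ->
  G * (p ^ 2 + q ^ 2) = p * q -> G < c / (c ^ 2 + 1) -> c * p < q.
Proof.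
  intros Hc Hpq HG HGc.
  assert (Hlt : p * q * (c ^ 2 + 1) < c * (p ^ 2 + q ^ 2)).
  { rewrite <- HG. apply (Rmult_lt_compat_r (c ^ 2 + 1)) in HGc; [| nra].
    unfold Rdiv in HGc. rewrite (Rmult_assoc c), Rinv_l, Rmult_1_r in HGc by nra.
    assert (0 < p ^ 2 + q ^ 2) by nra. nra. }
  (* p q (c^2 + 1) - c (p^2 + q^2) = (c p - q) (c q - p), and c q - p > 0 *)
  destruct (Rlt_or_le (c * p) q) as [Hcpq|Hcpq]; [exact Hcpq | exfalso].
  assert (0 <= (c * p - q) * (c * q - p)) by (apply Rmult_le_pos; nra).
  nra.
Qed.

Lemma odd_sq_add_ge (m p q : nat) : Nat.Odd m -> Nat.Odd p -> Nat.Odd q ->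
  (INR m - 2) * INR p < INR q -> INR m ^ 2 + 1 <= INR p ^ 2 + INR q ^ 2.
Proof.
  intros [i Hm] [j Hp] [k Hq] Hlt.
  assert (HqR : 1 <= INR q) by (apply (le_INR 1); lia).
  pose proof (pos_INR m).
  destruct (Nat.eq_dec p 1) as [->|Hp3].
  - assert (Hmq : (m <= q)%nat).
    { enough (m < q + 2)%nat by lia.
      apply INR_lt. rewrite plus_INR. simpl in Hlt |- *. lra. }
    apply le_INR in Hmq. simpl. nra.
  - assert (HpR : 3 <= INR p) by (replace 3 with (INR 3) by (simpl; ring); apply le_INR; lia).
    destruct (Rle_or_lt (INR m) 2) as [Hm2|Hm2]; [nra|].
    assert (3 * (INR m - 2) < INR q) by nra.
    nra.
Qed.

Lemma reaches_time_ge (m : nat) (G T : R) : Nat.Odd m -> (3 <= m)%nat ->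
  0 < G < (INR m - 2) / ((INR m - 2) ^ 2 + 1) -> 0 < T -> reaches G T ->
  PI / 2 * sqrt (INR m ^ 2 + 1) <= T.
Proof.
  intros Hm Hm3 HG HT Hreach.
  pose proof (div_sq_add1_le_half (INR m - 2)).
  destruct (reaches_odd_resonance G T ltac:(lra) HT Hreach)
    as (p & q & Hp & Hq & Hpq & HGpq & HTpq).
  assert (H1p : 1 <= INR p) by (destruct Hp; apply (le_INR 1); lia).
  assert (Hc : 1 <= INR m - 2) by (apply (le_INR 3) in Hm3; simpl in Hm3; lra).
  assert (Hratio : (INR m - 2) * INR p < INR q).
  { apply (resonance_ratio_gt G); [exact Hc | | exact HGpq | lra].
    split; [lra | now apply lt_INR]. }
  pose proof (odd_sq_add_ge m p q Hm Hp Hq Hratio) as Hsq.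
  pose proof PI_RGT_0.
  assert (Hsqrt : sqrt (INR m ^ 2 + 1) <= 2 * T / PI).
  { rewrite <- (sqrt_pow2 (2 * T / PI)) by (apply Rdiv_le_0_compat; lra).
    apply sqrt_le_1_alt. unfold Rdiv. rewrite Rpow_mult_distr, HTpq, pow_inv.
    field_simplify; lra. }
  apply (Rmult_le_compat_l (PI / 2)) in Hsqrt; [| lra].
  replace (PI / 2 * (2 * T / PI)) with T in Hsqrt by (field; lra). exact Hsqrt.
Qed.

Lemma reaches_of_resonance (a b p q T : R) :
  a * a + b * b = 1 -> b * b - a * a <> 0 ->
  p * p = 1 + 2 * (a * b) -> q * q = 1 - 2 * (a * b) -> p <> 0 -> q <> 0 ->
  cos (2 * a * T) = -1 -> cos (2 * b * T) = -1 ->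
  cos (2 * p * T) = 1 -> cos (2 * q * T) = 1 ->
  reaches (a * b) T.
Proof.
  intros Hab Hd Hp Hq Hp0 Hq0 Hca Hcb Hcp Hcq.
  assert (Hsa : sin (2 * a * T) = 0) by (apply sin_eq_0_of_cos_sq; rewrite Hca; ring).
  assert (Hsb : sin (2 * b * T) = 0) by (apply sin_eq_0_of_cos_sq; rewrite Hcb; ring).
  assert (Hsp : sin (2 * p * T) = 0) by (apply sin_eq_0_of_cos_sq; rewrite Hcp; ring).
  assert (Hsq : sin (2 * q * T) = 0) by (apply sin_eq_0_of_cos_sq; rewrite Hcq; ring).
  set (G := a * b). set (d := / (b * b - a * a)). set (ip := / p). set (iq := / q).
  assert (Hdd : (b * b - a * a) * d = 1) by (apply Rinv_r; exact Hd).
  assert (Hip : p * ip = 1) by (apply Rinv_r; exact Hp0).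
  assert (Hiq : q * iq = 1) by (apply Rinv_r; exact Hq0).
  assert (H2 : 2 * / 2 = 1) by (apply Rinv_r; lra).
  clearbody d ip iq.
  (* Each block is the superposition of its normal modes fitted to the initial state. *)
  exists (fun t => d * (- (b * b * b * b) * cos (2 * a * t) + a * a * a * a * cos (2 * b * t))).
  exists (fun t => d * (b * b * b * sin (2 * a * t) - a * a * a * sin (2 * b * t))).
  exists (fun t => d * G * G * (cos (2 * a * t) - cos (2 * b * t))).
  exists (fun t => d * G * (- b * sin (2 * a * t) + a * sin (2 * b * t))).
  exists (fun t => (((1 + G) * (1 + G) - G * G * cos (2 * p * t)) * (ip * ip)
                   + ((1 - G) * (1 - G) - G * G * cos (2 * q * t)) * (iq * iq)) / 2).
  exists (fun t => - (G / 2) * (sin (2 * p * t) * ip + sin (2 * q * t) * iq)).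
  exists (fun t => (G * (1 + G) * (cos (2 * p * t) - 1) * (ip * ip)
                   + G * (1 - G) * (cos (2 * q * t) - 1) * (iq * iq)) / 2).
  exists (fun t => (G * (1 - G) * (cos (2 * q * t) - 1) * (iq * iq)
                   - G * (1 + G) * (cos (2 * p * t) - 1) * (ip * ip)) / 2).
  exists (fun t => - (G / 2) * (sin (2 * p * t) * ip - sin (2 * q * t) * iq)).
  exists (fun t => (((1 + G) * (1 + G) - G * G * cos (2 * p * t)) * (ip * ip)
                   - ((1 - G) * (1 - G) - G * G * cos (2 * q * t)) * (iq * iq)) / 2).
  split.
  - intros t. repeat match goal with |- _ /\ _ => split end;
      auto_derive; try easy; unfold G, Rdiv; nsatz.
  - rewrite !Rmult_0_r, cos_0, sin_0, Hca, Hcb, Hcp, Hcq, Hsa, Hsb, Hsp, Hsq.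
    repeat split; unfold G, Rdiv; nsatz.
Qed.

Lemma reaches_resonant (m : nat) : Nat.Odd m -> (1 < m)%nat ->
  reaches (INR m / (INR m ^ 2 + 1)) (PI / 2 * sqrt (INR m ^ 2 + 1)).
Proof.
  intros [k Hk] Hm1.
  set (M := INR m). set (s := sqrt (M ^ 2 + 1)).
  assert (HM : 1 < M) by (apply (lt_INR 1) in Hm1; exact Hm1).
  assert (Hs0 : 0 < s) by (unfold s; apply sqrt_lt_R0; nra).
  assert (Hs2 : s * s = M * M + 1) by (unfold s; rewrite sqrt_sqrt; [ring | nra]).
  assert (Hdiv : forall x y, x / s * (y / s) = x * y / (M * M + 1)).
  { intros x y. rewrite <- Hs2. field. lra. }
  replace (M / (M ^ 2 + 1)) with (1 / s * (M / s)) by (rewrite Hdiv; field; nra).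
  pose proof PI_RGT_0.
  apply (reaches_of_resonance _ _ ((M + 1) / s) ((M - 1) / s)); rewrite ?Hdiv.
  - field. nra.
  - replace (M * M / (M * M + 1) - 1 * 1 / (M * M + 1)) with ((M * M - 1) / (M * M + 1))
      by (field; nra).
    apply Rgt_not_eq, Rdiv_lt_0_compat; nra.
  - field. nra.
  - field. nra.
  - apply Rgt_not_eq, Rdiv_lt_0_compat; lra.
  - apply Rgt_not_eq, Rdiv_lt_0_compat; lra.
  - replace (2 * (1 / s) * (PI / 2 * s)) with PI by (field; lra). exact cos_PI.
  - replace (2 * (M / s) * (PI / 2 * s)) with (INR (S (2 * k)) * PI)
      by (rewrite <- Nat.add_1_r, <- Hk; fold M; field; lra).
    now rewrite cos_INR_mult_PI, pow_1_odd.
  - replace (2 * ((M + 1) / s) * (PI / 2 * s)) with (INR (2 * S k) * PI)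
      by (replace (2 * S k)%nat with (S m) by lia; rewrite S_INR; fold M; field; lra).
    now rewrite cos_INR_mult_PI, pow_1_even.
  - replace (2 * ((M - 1) / s) * (PI / 2 * s)) with (INR (2 * k) * PI)
      by (replace (2 * k)%nat with (m - 1)%nat by lia;
          rewrite minus_INR by lia; fold M; simpl; field; lra).
    now rewrite cos_INR_mult_PI, pow_1_even.
Qed.

Theorem corollary1 (m : nat) (G0 : R) :
  Nat.Odd m -> (3 <= m)%nat ->
  INR m / (INR m ^ 2 + 1) <= G0 ->
  G0 < (INR m - 2) / ((INR m - 2) ^ 2 + 1) ->
  (* attained with G = m/(m^2+1) at T = (pi/2) sqrt(m^2+1) *)
  (0 < INR m / (INR m ^ 2 + 1) <= G0 /\
   reaches (INR m / (INR m ^ 2 + 1)) (PI / 2 * sqrt (INR m ^ 2 + 1))) /\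
  (* and no admissible constant control reaches the target earlier *)
  (forall (G T : R), 0 < G <= G0 -> 0 < T -> reaches G T ->
     PI / 2 * sqrt (INR m ^ 2 + 1) <= T).
Proof.
  intros Hm Hm3 HG0m HG0.
  assert (HM : 3 <= INR m) by (replace 3 with (INR 3) by (simpl; ring); now apply le_INR).
  split; [split; [split|] |].
  - apply Rdiv_lt_0_compat; nra.
  - exact HG0m.
  - apply reaches_resonant; [exact Hm | lia].
  - intros G T HG HT. apply reaches_time_ge; auto. lra.
Qed.
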